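(* Let $Y$ be a normal solid vector space and $(X,d)$ a cone metric space over $Y$. Then for a sequence $(x_n)$ in $X$ and $x\in X$: $x_n\to x$ in $X$ if and only if $d(x_n,x)\to0$ in $Y$.
   Context: Vector space with convergence: a real vector space $Y$ with a relation $\to$ between sequences in $Y$ and points of $Y$ (uniqueness of limits not assumed) such that (C1) $x_n\to x$, $y_n\to y$ imply $x_n+y_n\to x+y$; (C2) $x_n\to x$, $\lambda\in\mathbb R$ imply $\lambda x_n\to\lambda x$; (C3) $\lambda_n\to\lambda$ in $\mathbb R$ imply $\lambda_n x\to\lambda x$. $A\subseteq Y$ is open if $x_n\to x\in A$ implies $x_n\in A$ for all but finitely many $n$; closed if $x_n\to x$, $x_n\in A$ $\forall n$ imply $x\in A$; $A^\circ$ is the union of all open subsets of $A$. A cone is a nonempty closed $K$ with $\lambda K\subseteq K$ ($\lambda\ge0$), $K+K\subseteq K$, $K\cap(-K)=\{0\}$; solid if $K\ne\{0\}$, $K^\circ\ne\emptyset$. A vector ordering is a partial order $\preceq$ with (V1) $x\preceq y\Rightarrow x+z\preceq y+z$; (V2) $\lambda\ge0$, $x\preceq y\Rightarrow\lambda x\preceq\lambda y$; (V3) $x_n\to x$, $y_n\to y$, $x_n\preceq y_n$ $\forall n\Rightarrow x\preceq y$. Solid vector space: positive cone $K=\{x:x\succeq0\}$ solid, with $x\prec y$ iff $y-x\in K^\circ$. Normal: whenever $x_n\preceq y_n\preceq z_n$ for all $n$, $x_n\to x$, $z_n\to x$, then $y_n\to x$. Cone metric space over $Y$: nonempty $X$ with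 $d\colon X\times X\to Y$, $d(x,y)\succeq0$, $d(x,y)=0$ iff $x=y$, $d(x,y)=d(y,x)$, $d(x,y)\preceq d(x,z)+d(z,y)$. Convergence in $X$: $x_n\to x$ iff for every $c\succ0$, $d(x_n,x)\prec c$ for all but finitely many $n$. *)

From HB Require Import structures.
From mathcomp Require Import all_boot all_order all_algebra.
From mathcomp Require Import reals.
Set Implicit Arguments. Unset Strict Implicit. Unset Printing Implicit Defensive.
Import Order.TTheory GRing.Theory Num.Theory.
Local Open Scope ring_scope.

Section VSC.
Variables (R : realType) (Y : lmodType R).

Definition real_cvg (lam : nat -> R) (l : R) : Prop :=
  forall e : R, 0 < e -> exists N : nat, forall n : nat, (N <= n)%N -> `|lam n - l| < e.

(* vector space with convergence: axioms (C1)-(C3); uniqueness of limits not assumed *)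
Definition is_vs_convergence (conv : (nat -> Y) -> Y -> Prop) : Prop :=
  [/\ (forall xs ys x y, conv xs x -> conv ys y -> conv (fun n => xs n + ys n) (x + y)),
      (forall xs x (l : R), conv xs x -> conv (fun n => l *: xs n) (l *: x))
    & (forall (lam : nat -> R) (l : R) (x : Y), real_cvg lam l ->
         conv (fun n => lam n *: x) (l *: x))].

Variable conv : (nat -> Y) -> Y -> Prop.

Definition c_open (A : Y -> Prop) : Prop :=
  forall xs x, conv xs x -> A x -> exists N : nat, forall n, (N <= n)%N -> A (xs n).

Definition c_closed (A : Y -> Prop) : Prop :=
  forall xs x, conv xs x -> (forall n, A (xs n)) -> A x.

Definition c_interior (A : Y -> Prop) : Y -> Prop :=
  fun x => exists U : Y -> Prop, [/\ c_open U, (forall y, U y -> A y) & U x].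

Definition is_cone (K : Y -> Prop) : Prop :=
  [/\ (exists x, K x), c_closed K,
      (forall (l : R) x, 0 <= l -> K x -> K (l *: x)),
      (forall x y, K x -> K y -> K (x + y))
    & (forall x, K x -> K (- x) -> x = 0)].

Definition is_solid_cone (K : Y -> Prop) : Prop :=
  [/\ is_cone K, (exists x, K x /\ x <> 0) & (exists x, c_interior K x)].

Definition is_vector_ordering (le : Y -> Y -> Prop) : Prop :=
  [/\ (forall x, le x x),
      (forall x y, le x y -> le y x -> x = y),
      (forall x y z, le x y -> le y z -> le x z) /\
      (forall x y z, le x y -> le (x + z) (y + z)),
      (forall (l : R) x y, 0 <= l -> le x y -> le (l *: x) (l *: y))
    & (forall xs ys x y, conv xs x -> conv ys y -> (forall n, le (xs n) (ys n)) -> le x y)].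

Definition pos_cone (le : Y -> Y -> Prop) : Y -> Prop := fun x => le 0 x.

Definition is_solid_vector_space (le : Y -> Y -> Prop) : Prop :=
  is_vs_convergence conv /\ is_vector_ordering le /\ is_solid_cone (pos_cone le).

Definition slt (le : Y -> Y -> Prop) (x y : Y) : Prop :=
  c_interior (pos_cone le) (y - x).

Definition is_normal (le : Y -> Y -> Prop) : Prop :=
  forall xs ys zs x, (forall n, le (xs n) (ys n) /\ le (ys n) (zs n)) ->
    conv xs x -> conv zs x -> conv ys x.

Definition is_cone_metric (X : Type) (le : Y -> Y -> Prop) (d : X -> X -> Y) : Prop :=
  [/\ (forall x y, le 0 (d x y)),
      (forall x y, d x y = 0 <-> x = y),
      (forall x y, d x y = d y x)
    & (forall x y z, le (d x y) (d x z + d z y))].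

Definition cm_conv (X : Type) (le : Y -> Y -> Prop) (d : X -> X -> Y)
  (xs : nat -> X) (x : X) : Prop :=
  forall c, slt le 0 c -> exists N : nat, forall n, (N <= n)%N -> slt le (d (xs n) x) c.

End VSC.

(* If [c] is an interior point of the positive cone, then so is every [c / (k+1)],
   and every vector is dominated by some multiple of [c].  Hence [x_n -> x] in the
   cone metric gives [0 <= d(x_n, x) <= t_n c] for reals [t_n -> 0], and normality
   squeezes [d(x_n, x)] to [0].  Conversely, if [d(x_n, x) -> 0] and [c >> 0], the
   sequence [c - d(x_n, x)] converges to [c], so it eventually lies in any open
   subset of the cone containing [c]. *)
From mathcomp Require Import all_boot all_order all_algebra reals boolp.
Set Implicit Arguments. Unset Strict Implicit. Unset Printing Implicit Defensive.
Import Order.TTheory GRing.Theory Num.Theory.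
Local Open Scope ring_scope.

Lemma inv_succ_cvg0 (R : realType) : real_cvg (fun n : nat => (n.+1%:R : R)^-1) 0.
Proof.
move=> e e0; exists (Num.bound e^-1) => n hn.
rewrite subr0 ger0_norm ?invr_ge0 ?ler0n //.
rewrite -[X in _ < X](invrK e) ltf_pV2 ?posrE ?ltr0Sn ?invr_gt0 //.
apply: lt_le_trans (archi_boundP _) _; first by rewrite invr_ge0 ltW.
by rewrite ler_nat; apply: leq_trans hn _.
Qed.

Section ConeInterior.
Variables (R : realType) (Y : lmodType R) (conv : (nat -> Y) -> Y -> Prop)
  (le : Y -> Y -> Prop).
Hypotheses (hconv : is_vs_convergence conv) (hle : is_vector_ordering conv le).

Let interior := c_interior conv (pos_cone le).

Lemma conv_cst c : conv (fun _ => c) c.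
Proof.
have [_ _ C3] := hconv.
have := C3 (fun _ => 1) 1 c.
rewrite (funext (fun _ => scale1r c)) scale1r; apply=> e e0.
by exists 0%N => n _; rewrite subrr normr0.
Qed.

Lemma subr_ge0_le a b : le 0 (a - b) -> le b a.
Proof.
have [_ _ [_ V1] _ _] := hle.
by move=> /(V1 _ _ b); rewrite add0r subrK.
Qed.

Lemma slt_le a b : slt conv le a b -> le a b.
Proof. by case=> U [_ UK Uba]; apply/subr_ge0_le/UK. Qed.

Lemma interior_scale l y : 0 < l -> interior y -> interior (l *: y).
Proof.
have [_ C2 _] := hconv; have [_ _ _ V2 _] := hle.
move=> l0 [U [Uo UK Uy]]; have l_neq0 : l != 0 by rewrite gt_eqF.
exists (fun z => U (l^-1 *: z)); split.
- by move=> zs z /(C2 _ _ l^-1) /Uo.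
- move=> z /UK /(V2 l _ _ (ltW l0)).
  by rewrite /pos_cone scaler0 scalerA divff // scale1r.
- by rewrite scalerA mulVf // scale1r.
Qed.

(* [c - y/(n+1) -> c], so [c - y/(n+1)] is eventually in the cone. *)
Lemma interior_absorbing c : interior c -> forall y, exists t, 0 <= t /\ le y (t *: c).
Proof.
have [C1 C2 C3] := hconv; have [_ _ _ V2 _] := hle.
move=> [U [Uo UK Uc]] y.
have hs : conv (fun n => c + (-1) *: ((n.+1%:R : R)^-1 *: y)) (c + (-1) *: (0 *: y)).
  by apply: C1; [exact: conv_cst | apply/C2/C3/inv_succ_cvg0].
rewrite scale0r scaler0 addr0 in hs.
have [N HN] := Uo _ _ hs Uc.
have := V2 N.+1%:R _ _ (ler0n _ _) (UK _ (HN N (leqnn N))).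
rewrite scaler0 scalerDr scaleN1r scalerN scalerA divff ?pnatr_eq0 // scale1r.
by move=> /subr_ge0_le hy; exists N.+1%:R; split; first exact: ler0n.
Qed.

Lemma cvg0_eventually_slt ys c :
  conv ys 0 -> slt conv le 0 c -> exists N, forall n, (N <= n)%N -> slt conv le (ys n) c.
Proof.
have [C1 C2 _] := hconv.
move=> ys0 [U [Uo UK Uc]]; rewrite subr0 in Uc.
have hs : conv (fun n => c + (-1) *: ys n) (c + (-1) *: 0).
  by apply: C1; [exact: conv_cst | apply: C2].
rewrite scaler0 addr0 in hs.
have [N HN] := Uo _ _ hs Uc.
exists N => n /HN Un; exists U; split => //.
by rewrite -scaleN1r.
Qed.

(* The reals [t_n] are [1/(m+1)] for the largest [m] whose threshold [n] has passed,
   and come from [interior_absorbing] before the first threshold. *)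
Lemma eventually_le_dominated c ys : interior c ->
  (forall k, exists N, forall n, (N <= n)%N -> le (ys n) ((k.+1%:R : R)^-1 *: c)) ->
  exists t : nat -> R, real_cvg t 0 /\ forall n, le (ys n) (t n *: c).
Proof.
move=> hc /choice [N0 HN0].
pose N k := (N0 k + k)%N.
have hbound n : exists t : R, [/\ 0 <= t, le (ys n) (t *: c) &
    forall k, (N k <= n)%N -> t <= (k.+1%:R)^-1].
  have [exP|nex] := pselect (exists k, (N k <= n)%N).
  - have ubP k : (N k <= n)%N -> (k <= n)%N by apply/leq_trans/leq_addl.
    have [m Pm maxm] := ex_maxnP exP ubP.
    exists (m.+1%:R)^-1; split; first by rewrite invr_ge0 ler0n.
      by apply: HN0; apply: leq_trans Pm; apply: leq_addr.
    by move=> k /maxm km; rewrite lef_pV2 ?posrE ?ltr0Sn // ler_nat.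
  - have [t [t0 ht]] := interior_absorbing hc (ys n).
    by exists t; split => // k hk; case: nex; exists k.
have [t Ht] := choice hbound.
exists t; split => [e e0|n]; last by have [] := Ht n.
have [M HM] := inv_succ_cvg0 e0.
exists (N M) => n hn; have [t0 _ tb] := Ht n.
rewrite subr0 ger0_norm //; apply: le_lt_trans (tb M hn) _.
by have := HM M (leqnn M); rewrite subr0 ger0_norm // invr_ge0 ler0n.
Qed.

Lemma normal_squeeze0 ys (t : nat -> R) c : is_normal conv le -> real_cvg t 0 ->
  (forall n, le 0 (ys n) /\ le (ys n) (t n *: c)) -> conv ys 0.
Proof.
have [_ _ C3] := hconv.
move=> hN t0 hys; apply: (hN (fun _ => 0) _ (fun n => t n *: c)) => //.
  exact: conv_cst.
by rewrite -(scale0r c); apply: C3.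
Qed.

Lemma eventually_slt_cvg0 ys : is_normal conv le -> (exists c, interior c) ->
  (forall n, le 0 (ys n)) ->
  (forall c, slt conv le 0 c ->
     exists N, forall n, (N <= n)%N -> slt conv le (ys n) c) ->
  conv ys 0.
Proof.
move=> hN [c hc] ys_ge0 hys.
have hk k : exists N, forall n, (N <= n)%N -> le (ys n) ((k.+1%:R : R)^-1 *: c).
  have [|N HN] := hys ((k.+1%:R : R)^-1 *: c).
    by rewrite /slt subr0; apply: interior_scale; rewrite ?invr_gt0 ?ltr0Sn.
  by exists N => n /HN /slt_le.
have [t [t0 ht]] := eventually_le_dominated hc hk.
exact: (normal_squeeze0 hN t0 (fun n => conj (ys_ge0 n) (ht n))).
Qed.

End ConeInterior.

Theorem theorem9p18 (R : realType) (Y : lmodType R)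
  (conv : (nat -> Y) -> Y -> Prop) (le : Y -> Y -> Prop)
  (hY : is_solid_vector_space conv le) (hN : is_normal conv le)
  (X : Type) (d : X -> X -> Y) (hd : is_cone_metric le d)
  (xs : nat -> X) (x : X) :
  cm_conv conv le d xs x <-> conv (fun n => d (xs n) x) 0.
Proof.
have [hconv [hle [_ _ hint]]] := hY.
have [d_ge0 _ _ _] := hd.
split => [hcm | hd0].
- exact: (eventually_slt_cvg0 hconv hle hN hint (fun n => d_ge0 (xs n) x) hcm).
- by move=> c; apply: (cvg0_eventually_slt (le := le) hconv hd0).
Qed.
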